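(* Let $G$, $k\ge 3$, the choice strings $c_{i,j}$, the template string $t$, $L$ and $d$ be as in the binary construction in the context, and let $s\in\{0,1\}^L$ be a solution, i.e. $t$ and every choice string $c_{i,j}$ ($1\le i<j\le k$) have a substring of length $L$ at Hamming distance at most $d$ from $s$. Then every section of the encoding part of $s$ contains exactly one symbol $1$.
   Context: Let $G=(V,E)$ be an undirected simple graph with $V=\{v_1,\dots,v_n\}$ and edge set $E=\{e_1,\dots,e_m\}$, and let $k\ge 3$ be an integer; put $N=\binom{k}{2}$ and $b=nk-2k+2$. All strings are over $\{0,1\}$. For $1\le p\le n$ let $\mathrm{number}(p)=0^{p-1}10^{n-p}$. Let $\mathrm{front\_tag}=(1^{3nk}0)^{nk}$ (length $(3nk+1)nk$). Order the pairs $(i,j)$, $1\le i<j\le k$, lexicographically and let $i'$ be the position of $(i,j)$ in this order. For an edge $e$ joining $v_r,v_s$ with $r<s$ let $\mathrm{encode}(i,j,e)=(0^n)^{i-1}\,\mathrm{number}(r)\,(0^n)^{j-i-1}\,\mathrm{number}(s)\,(0^n)^{k-j}$, $\mathrm{back\_tag}(i')=0^{(i'-1)b}1^{b}0^{(N-i')b}$, and $\mathrm{block}(i,j,e)=\mathrm{front\_tag}\,\mathrm{encode}(i,j,e)\,\mathrm{back\_tag}(i')$. The choice string is $c_{i,j}=\mathrm{block}(i,j,e_1)\cdots\mathrm{block}(i,j,e_m)$. The template string is $t=\mathrm{front\_tag}\,1^{nk}\,0^{Nb}$. Set $L=(3nk+1)nk+nk+Nb$ and $d=nk-k$. For a string $s$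 of length $L$, its encoding part is the substring of its positions $(3nk+1)nk+1,\dots,(3nk+1)nk+nk$, divided into $k$ consecutive sections of length $n$. *)

From mathcomp Require Import all_boot.
Set Implicit Arguments. Unset Strict Implicit. Unset Printing Implicit Defensive.

Definition zeros (l : nat) : seq bool := nseq l false.
Definition ones (l : nat) : seq bool := nseq l true.

Definition number (n p : nat) : seq bool := zeros (p - 1) ++ true :: zeros (n - p).

Definition front_tag (n k : nat) : seq bool :=
  flatten (nseq (n * k) (ones (3 * n * k) ++ [:: false])).

Definition Npairs (k : nat) : nat := 'C(k, 2).
Definition bb (n k : nat) : nat := n * k - 2 * k + 2.

Definition pairs (k : nat) : seq (nat * nat) :=
  [seq (i, j) | i <- iota 1 k, j <- iota i.+1 (k - i)].

Definition pair_pos (k i j : nat) : nat := (index (i, j) (pairs k)).+1.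

(* An edge is a pair (r, s) of vertex indices with r < s (vertices v_1..v_n). *)
Definition encode (n k i j : nat) (e : nat * nat) : seq bool :=
  flatten (nseq (i - 1) (zeros n)) ++ number n e.1 ++
  flatten (nseq (j - i - 1) (zeros n)) ++ number n e.2 ++
  flatten (nseq (k - j) (zeros n)).

Definition back_tag (n k i' : nat) : seq bool :=
  zeros ((i' - 1) * bb n k) ++ ones (bb n k) ++ zeros ((Npairs k - i') * bb n k).

Definition block (n k i j : nat) (e : nat * nat) : seq bool :=
  front_tag n k ++ encode n k i j e ++ back_tag n k (pair_pos k i j).

Definition choice_string (n k : nat) (E : seq (nat * nat)) (i j : nat) : seq bool :=
  flatten [seq block n k i j e | e <- E].

Definition template (n k : nat) : seq bool :=
  front_tag n k ++ ones (n * k) ++ zeros (Npairs k * bb n k).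

Definition LL (n k : nat) : nat := (3 * n * k + 1) * (n * k) + n * k + Npairs k * bb n k.
Definition dd (n k : nat) : nat := n * k - k.

Definition hamming (u v : seq bool) : nat := count (fun xy => xy.1 != xy.2) (zip u v).

Definition close_substring (w s : seq bool) (D : nat) : Prop :=
  exists p, p + size s <= size w /\ hamming (take (size s) (drop p w)) s <= D.

Definition is_solution (n k : nat) (E : seq (nat * nat)) (s : seq bool) : Prop :=
  size s = LL n k /\
  close_substring (template n k) s (dd n k) /\
  (forall i j, 1 <= i -> i < j -> j <= k ->
     close_substring (choice_string n k E i j) s (dd n k)).

Definition simple_graph (n : nat) (E : seq (nat * nat)) : Prop :=
  uniq E /\ all (fun e => (1 <= e.1) && (e.1 < e.2) && (e.2 <= n)) E.

(* section q (0-based, q < k) of the encoding part of s *)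
Definition section (n k : nat) (s : seq bool) (q : nat) : seq bool :=
  take n (drop ((3 * n * k + 1) * (n * k) + q * n) s).

(* A window of a choice string within distance d of s is within 2d of the template, and the
   front tag (1^{3nk} 0)^{nk} forces such a window to be aligned with a block: a shifted window
   either lays a long stretch of the runs pattern over the sparse tail of a block, or shifts all
   periods of the pattern but the first or the last, each shifted period costing two mismatches.
   So for every pair (i,j) some block is within d of s.  Compared with the template, which is all
   ones on the encoding part and all zeros on the back part, the budget d = nk - k is then exactly
   exhausted: the ones of the chosen encoding are ones of s, the ones of the back part of s are
   ones of the back tag of (i,j), and the encoding part of s has k more ones than the back part.
   The back tags of (1,2) and (1,3) are disjoint, so the back part of s is zero and its encoding
   part has k ones, while the edges chosen for the pairs (1,j) put a one in every section. *)

From mathcomp Require Import all_boot zify.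
Set Implicit Arguments. Unset Strict Implicit. Unset Printing Implicit Defensive.

Lemma leq_sum_nat m n (F G : nat -> nat) :
  (forall i, m <= i < n -> F i <= G i) ->
  \sum_(m <= i < n) F i <= \sum_(m <= i < n) G i.
Proof. by move=> FG; rewrite big_nat [X in _ <= X]big_nat; apply: leq_sum. Qed.

Lemma leq_sum_subrange (F : nat -> nat) m n m' n' :
  m <= m' -> n' <= n -> \sum_(m' <= i < n') F i <= \sum_(m <= i < n) F i.
Proof.
move=> le_m le_n; case: (leqP n' m') => [ge_mn | lt_mn]; first by rewrite big_geq.
rewrite [X in _ <= X](@big_cat_nat _ _ _ m') //; last lia.
rewrite [X in _ <= _ + X](@big_cat_nat _ _ _ n') //; last exact: ltnW.
by rewrite addnCA leq_addr.
Qed.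

Lemma sum_nat_shift (F : nat -> nat) a m n :
  \sum_(m <= i < n) F (a + i) = \sum_(a + m <= i < a + n) F i.
Proof. by rewrite addnC big_addn addKn; apply: eq_bigr => i _; rewrite addnC. Qed.

Lemma sum_nat_segments (F : nat -> nat) K P :
  \sum_(0 <= x < K * P) F x = \sum_(0 <= u < K) \sum_(0 <= i < P) F (u * P + i).
Proof.
rewrite big_nat_mul; apply: eq_bigr => u _.
by rewrite sum_nat_shift addn0 mulSnr.
Qed.

Lemma sum_mod_eq_le1 P r m l :
  l <= P -> \sum_(m <= x < m + l) (x %% P == r) <= 1.
Proof.
elim: l => [|l IH] lP; first by rewrite addn0 big_geq.
rewrite addnS big_nat_recr ?leq_addr //=.
case: eqP => [last_r | _]; last by rewrite addn0 IH // ltnW.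
rewrite big1_seq // => x /andP[_]; rewrite mem_index_iota => /andP[mx xl].
case: eqP => // x_r; have: (m + l) %% P = x %% P by rewrite last_r x_r.
rewrite -(subnKC (ltnW xl)) -[X in _ = X %[mod P]]addn0 => /eqP.
by rewrite eqn_modDl mod0n modn_small; lia.
Qed.

Lemma sum_eq_all_one (f : nat -> nat) k q :
  (forall q, q < k -> 0 < f q) -> \sum_(0 <= q < k) f q = k -> q < k -> f q = 1.
Proof.
move=> f_gt0 sum_k qk.
have sum_excess : \sum_(0 <= q < k) f q = k + \sum_(0 <= q < k) (f q - 1).
  rewrite -{2}[k]muln1 -{2}[k]subn0 -sum_nat_const_nat -big_split /=.
  by apply: eq_big_nat => i /andP[_ ik]; have := f_gt0 i ik; lia.
have := leq_sum_subrange (fun q => f q - 1) (leq0n q) qk.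
by rewrite big_nat1; have := f_gt0 q qk; lia.
Qed.

Lemma hamming_cons x y u v : hamming (x :: u) (y :: v) = (x != y) + hamming u v.
Proof. by []. Qed.

Lemma hamming_sym u v : hamming u v = hamming v u.
Proof. by elim: u v => [|x u IH] [|y v] //=; rewrite !hamming_cons IH eq_sym. Qed.

Lemma hamming_cat u1 u2 v1 v2 : size u1 = size v1 ->
  hamming (u1 ++ u2) (v1 ++ v2) = hamming u1 v1 + hamming u2 v2.
Proof. by move=> eq_sz; rewrite /hamming zip_cat // count_cat. Qed.

Lemma leq_hamming_take m u v : hamming (take m u) (take m v) <= hamming u v.
Proof. by elim: m u v => [|m IH] [|x u] [|y v] //=; rewrite !hamming_cons leq_add2l. Qed.

Lemma leq_hamming_trans u v w : size u = size v -> size v = size w ->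
  hamming u w <= hamming u v + hamming v w.
Proof.
elim: u v w => [|x u IH] [|y v] [|z w] //= [sz_uv] [sz_vw].
by rewrite !hamming_cons; have := IH v w sz_uv sz_vw; case: x; case: y; case: z => /=; lia.
Qed.

Lemma hamming_sum_nth u v : size u = size v ->
  hamming u v = \sum_(0 <= i < size u) (nth false u i != nth false v i).
Proof.
elim: u v => [|x u IH] [|y v] //= => [_ | [sz_uv]]; first by rewrite big_geq.
by rewrite big_nat_recl // hamming_cons IH.
Qed.

Lemma sum_nth_count u : \sum_(0 <= i < size u) nth false u i = count id u.
Proof.
elim: u => [|x u IH]; first by rewrite big_geq.
by rewrite /= big_nat_recl // IH.
Qed.

Lemma hamming_ones v : hamming (ones (size v)) v = size v - count id v.
Proof.
elim: v => [|y v IH] //=; rewrite hamming_cons IH.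
by have := count_size id v; case: y => /=; lia.
Qed.

Lemma hamming_zeros v : hamming (zeros (size v)) v = count id v.
Proof. by elim: v => [|y v IH] //=; rewrite hamming_cons IH; case: y. Qed.

Definition common (u v : seq bool) := count (fun xy => xy.1 && xy.2) (zip u v).

Lemma common_cons x y u v : common (x :: u) (y :: v) = (x && y) + common u v.
Proof. by []. Qed.

Lemma hamming_common u v : size u = size v ->
  hamming u v + 2 * common u v = count id u + count id v.
Proof.
elim: u v => [|x u IH] [|y v] //= [sz_uv].
by rewrite hamming_cons common_cons; have := IH v sz_uv; case: x; case: y => /=; lia.
Qed.

Lemma common_sym u v : common u v = common v u.
Proof. by elim: u v => [|x u IH] [|y v] //=; rewrite !common_cons IH andbC. Qed.

Lemma common_le_count u v : common u v <= count id u.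
Proof.
elim: u v => [|x u IH] [|y v] //=.
by rewrite common_cons; have := IH v; case: x; case: y => /=; lia.
Qed.

Lemma common_count_sub u v : size u = size v -> common u v = count id u ->
  forall i, nth false u i -> nth false v i.
Proof.
elim: u v => [|x u IH] [|y v] //= [sz_uv]; rewrite common_cons => eq_c.
have le_c := common_le_count u v.
case=> [|i] /=; first by case: x eq_c; case: y => //=; lia.
by apply: IH => //; move: eq_c; case: x; case: y => /=; lia.
Qed.

Lemma close_substring_same_size w s D :
  size w = size s -> close_substring w s D -> hamming w s <= D.
Proof.
move=> eq_sz [p [p_sz close]]; have p0 : p = 0 by lia.
by move: close; rewrite p0 drop0 -eq_sz take_size.
Qed.

Lemma count_sections n k x : size x = k * n ->
  count id x = \sum_(0 <= q < k) count id (take n (drop (q * n) x)).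
Proof.
elim: k x => [|k IH] x x_sz; first by rewrite big_geq //; move: x_sz => /size0nil ->.
rewrite big_nat_recl // mul0n drop0 -{1}(cat_take_drop n x) count_cat (IH (drop n x)); last first.
  by rewrite size_drop x_sz mulSn addKn.
by congr (_ + _); apply: eq_bigr => q _; rewrite drop_drop mulSn addnC.
Qed.

Section UniformFlatten.

Variables (A : Type) (x0 : A) (L : nat) (bs : seq (seq A)).
Hypothesis size_bs : forall i, i < size bs -> size (nth [::] bs i) = L.

Lemma size_flatten_uniform : size (flatten bs) = size bs * L.
Proof.
elim: bs size_bs => [|u bs' IH] //= sz.
by rewrite size_cat (sz 0) // IH ?mulSn // => i; apply: (sz i.+1).
Qed.

Lemma nth_flatten_uniform y : y < size bs * L ->
  nth x0 (flatten bs) y = nth x0 (nth [::] bs (y %/ L)) (y %% L).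
Proof.
elim: bs size_bs y => [|u bs' IH] //= sz y y_lt.
rewrite nth_cat (sz 0) //; case: ltnP => [y_L | L_y].
  by rewrite divn_small // modn_small.
have L_gt0 : 0 < L by move: y_lt; rewrite mulSn; lia.
rewrite -{2 3}(subnK L_y) modnDr divnDr ?dvdnn // divnn L_gt0 addn1 /=.
by rewrite IH // => [i | ]; [apply: (sz i.+1) | move: y_lt; rewrite mulSn; lia].
Qed.

Lemma take_drop_flatten_uniform b : b < size bs ->
  take L (drop (b * L) (flatten bs)) = nth [::] bs b.
Proof.
elim: bs size_bs b => [|u bs' IH] //= sz [|b] b_lt.
  by rewrite drop0 take_cat (sz 0) // ltnn subnn take0 cats0.
by rewrite mulSn drop_cat (sz 0) // ltnNge leq_addr /= addKn IH // => i; apply: (sz i.+1).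
Qed.

End UniformFlatten.

Definition run_pattern M K := flatten (nseq K (ones M ++ [:: false])).

Lemma size_nth_runs M K i :
  i < K -> size (nth [::] (nseq K (ones M ++ [:: false])) i) = M.+1.
Proof. by move=> iK; rewrite nth_nseq iK size_cat size_nseq addn1. Qed.

Lemma size_run_pattern M K : size (run_pattern M K) = K * M.+1.
Proof. by rewrite (@size_flatten_uniform _ M.+1) ?size_nseq //; apply: size_nth_runs. Qed.

Lemma nth_run_pattern M K x : x < K * M.+1 ->
  nth false (run_pattern M K) x = (x %% M.+1 != M).
Proof.
move=> x_lt; rewrite (@nth_flatten_uniform _ _ M.+1) ?size_nseq //; last exact: size_nth_runs.
rewrite nth_nseq ltn_divLR // x_lt nth_cat size_nseq nth_nseq.
case: ltnP => [lt_M | ge_M]; first by rewrite ltn_eqF.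
have -> : x %% M.+1 = M by have := ltn_pmod x (ltn0Sn M); lia.
by rewrite subnn eqxx.
Qed.

Section RunAlignment.

(* [c] is read on [[0, Y)] as a sequence of blocks of length [L], each made of the [K] periods
   [1^M 0] of the runs pattern followed by a tail of length [T] holding at most [W] ones. *)
Variables (M K T W D Y : nat) (c : nat -> bool).

Local Notation P := M.+1.
Local Notation F := (K * P).
Local Notation L := (K * P + T).

Hypothesis c_runs : forall y, y < Y -> y %% L < F -> c y = (y %% L %% P != M).
Hypothesis c_tail : forall b, b * L < Y -> \sum_(0 <= o < T) c (b * L + F + o) <= W.
Hypothesis slack_P : D + W + 2 <= P.
Hypothesis slack_T : D + W + 2 <= T.
Hypothesis slack_K : D + 3 <= 2 * K.

(* A period read with shift [r] mismatches the pattern at the pattern's zero [M] and at the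
   zero [M - r] of [c]. *)
Lemma misaligned_segment_mismatch y0 :
  y0 + M < Y -> y0 %% L + M < F -> y0 %% L %% P != 0 ->
  2 <= \sum_(0 <= i < P) (c (y0 + i) != (i != M)).
Proof.
set r := y0 %% L %% P => y0_Y y0_F r_gt0.
have r_lt : r < P by rewrite ltn_mod.
have c_seg i : i <= M -> c (y0 + i) = ((r + i) %% P != M).
  move=> iM; have y0iL : (y0 + i) %% L = y0 %% L + i.
    by rewrite -modnDml modn_small //; lia.
  by rewrite c_runs ?y0iL ?modnDml //; lia.
have hit_zero : (c (y0 + M) != (M != M)) = true.
  rewrite c_seg // eqxx (_ : r + M = r.-1 + P); last lia.
  by rewrite modnDr modn_small; lia.
have hit_one : (c (y0 + (M - r)) != (M - r != M)) = true.
  by rewrite c_seg ?leq_subr // subnKC ?modn_small //; lia.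
rewrite big_nat_recr //= hit_zero addn1 ltnS.
have := leq_sum_subrange (fun i => c (y0 + i) != (i != M)) (leq0n (M - r)) (_ : (M - r).+1 <= M).
by rewrite big_nat1 hit_one; apply; lia.
Qed.

Variable p : nat.
Hypothesis p_Y : p + F <= Y.

Local Notation mismatch := (fun x => c (p + x) != (x %% P != M)).
Local Notation segment u := (\sum_(0 <= i < P) (c (p + u * P + i) != (i != M))).

(* Over a stretch of length [D + W + 2 <= P] the pattern has at most one zero, while a tail
   supplies at most [W] ones. *)
Lemma tail_run_mismatch a :
  p <= a -> a + (D + W + 2) <= p + F -> F <= a %% L -> a %% L + (D + W + 2) <= L ->
  D < \sum_(0 <= x < F) mismatch x.
Proof.
move=> pa aF Fa aL.
have c_ones : \sum_(a <= y < a + (D + W + 2)) c y <= W.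
  have a_eq := divn_eq a L.
  apply: leq_trans (c_tail (b := a %/ L) _); last lia.
  by rewrite (sum_nat_shift (fun y => c y)) addn0; apply: leq_sum_subrange; lia.
have runs_ones : D + W + 1 <= \sum_(a - p <= x < a - p + (D + W + 2)) (x %% P != M).
  have split_l : \sum_(a - p <= x < a - p + (D + W + 2)) (x %% P != M) +
                 \sum_(a - p <= x < a - p + (D + W + 2)) (x %% P == M) = D + W + 2.
    rewrite -big_split (eq_bigr (fun=> 1)) => [|x _]; last by case: eqP.
    by rewrite sum_nat_const_nat addKn muln1.
  have := sum_mod_eq_le1 M (a - p) slack_P; lia.
have window : \sum_(a - p <= x < a - p + (D + W + 2)) (x %% P != M) <=
    \sum_(a - p <= x < a - p + (D + W + 2)) mismatch x + \sum_(a <= y < a + (D + W + 2)) c y.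
  rewrite -[in X in _ <= _ + X](subnKC pa) -(addnA p) -(sum_nat_shift (fun y => c y)) -big_split.
  by apply: leq_sum_nat => x _ /=; case: (c _); case: (_ != _).
have := leq_sum_subrange mismatch (leq0n (a - p)) (_ : a - p + (D + W + 2) <= F).
lia.
Qed.

Hypothesis close : \sum_(0 <= x < F) mismatch x <= D.

Lemma offset_in_runs_small : p %% L < F -> p %% L < D + W + 2.
Proof.
move=> oF; rewrite ltnNge; apply/negP => long.
have := tail_run_mismatch (a := p + (F - p %% L)).
by rewrite -modnDml subnKC ?(@modn_small F); lia.
Qed.

Lemma offset_in_tail_large : F <= p %% L -> L - p %% L < D + W + 2.
Proof.
move=> Fo; rewrite ltnNge; apply/negP => long.
have P_F : P <= F by rewrite leq_pmull //; lia.
have := tail_run_mismatch (a := p); have := ltn_pmod p (_ : 0 < L); lia.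
Qed.

Lemma segment_after_runs_offset u : 0 < p %% L < F -> u < K.-1 -> 2 <= segment u.
Proof.
move=> /andP[o_gt0 oF] uK; have o_P := offset_in_runs_small oF.
have uP : P + (P + u * P) <= F by rewrite -!mulSn leq_pmul2r //; lia.
have y0L : (p + u * P) %% L = p %% L + u * P by rewrite -modnDml modn_small; lia.
apply: misaligned_segment_mismatch; rewrite ?y0L; try lia.
by rewrite addnC modnMDl modn_small; lia.
Qed.

Lemma segment_after_tail_offset u : F <= p %% L -> 0 < u < K -> 2 <= segment u.
Proof.
move=> Fo /andP[]; have o_L := offset_in_tail_large Fo; case: u => // u _ uK.
have uP : P + (P + u * P) <= F by rewrite -!mulSn leq_pmul2r //; lia.
have y0L : (p + u.+1 * P) %% L = u * P + (P - (L - p %% L)).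
  rewrite -modnDml (_ : p %% L + u.+1 * P = u * P + (P - (L - p %% L)) + L); last first.
    by have := ltn_pmod p (_ : 0 < L); rewrite mulSn; lia.
  by rewrite modnDr modn_small; lia.
apply: misaligned_segment_mismatch; rewrite ?y0L ?mulSn; try lia.
by rewrite modnMDl modn_small; lia.
Qed.

Lemma sum_mismatch_segments : \sum_(0 <= x < F) mismatch x = \sum_(0 <= u < K) segment u.
Proof.
rewrite sum_nat_segments; apply: eq_bigr => u _; apply: eq_big_nat => i /andP[_ iP].
by rewrite addnA modnMDl modn_small.
Qed.

Theorem run_alignment : L %| p.
Proof.
rewrite /dvdn; case: (posnP (p %% L)) => [// | o_gt0]; exfalso.
have [u0 [u0_le1 costly]] : exists u0, u0 <= 1 /\ forall u, u0 <= u < u0 + K.-1 -> 2 <= segment u.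
  case: (ltnP (p %% L) F) => oF; [exists 0 | exists 1]; split=> // u /andP[u0u uK].
    by apply: segment_after_runs_offset; rewrite ?o_gt0.
  by apply: segment_after_tail_offset => //; lia.
have := leq_sum_nat costly; rewrite sum_nat_const_nat addKn.
have := leq_sum_subrange (fun u => segment u) (leq0n u0) (_ : u0 + K.-1 <= K).
by rewrite -sum_mismatch_segments; lia.
Qed.

End RunAlignment.

Lemma flatten_runs_aligned M K T W D (bs : seq (seq bool)) p :
  D + W + 2 <= M.+1 -> D + W + 2 <= T -> D + 3 <= 2 * K ->
  (forall u, u \in bs -> [/\ size u = K * M.+1 + T, take (K * M.+1) u = run_pattern M K
                           & count id (drop (K * M.+1) u) <= W]) ->
  p + K * M.+1 <= size (flatten bs) ->
  hamming (take (K * M.+1) (drop p (flatten bs))) (run_pattern M K) <= D ->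
  (K * M.+1 + T) %| p.
Proof.
set F := K * M.+1; set L := F + T => slack_P slack_T slack_K blocks p_size close.
have block_i i (i_lt : i < size bs) := blocks _ (mem_nth [::] i_lt).
have size_i i : i < size bs -> size (nth [::] bs i) = L by case/block_i.
have size_c := size_flatten_uniform size_i.
have L_gt0 : 0 < L by rewrite /L; lia.
have block_idx y : y < size (flatten bs) -> y %/ L < size bs by rewrite size_c ltn_divLR.
apply: (@run_alignment M K T W D (size (flatten bs)) (nth false (flatten bs))) => //.
- move=> y y_lt y_F; have [_ runs _] := block_i _ (block_idx _ y_lt).
  by rewrite (nth_flatten_uniform _ size_i) -?size_c // -(nth_take _ y_F) runs nth_run_pattern.
- move=> b b_lt; have b_bs : b < size bs by rewrite -(ltn_pmul2r L_gt0) -size_c.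
  have [size_u _ tail_u] := block_i _ b_bs.
  have bL : L + b * L <= size bs * L by rewrite -mulSn leq_mul2r b_bs orbT.
  have size_tail : size (drop F (nth [::] bs b)) = T by rewrite size_drop size_u /L addKn.
  apply: leq_trans tail_u; rewrite -sum_nth_count size_tail; apply/eq_leq.
  apply: eq_big_nat => o /andP[_ oT]; rewrite (nth_flatten_uniform _ size_i) -?addnA.
    by rewrite divnMDl ?modnMDl ?divn_small ?modn_small ?addn0 ?nth_drop //; lia.
  lia.
have size_w : size (take F (drop p (flatten bs))) = F by rewrite size_takel // size_drop; lia.
apply: leq_trans close; rewrite hamming_sum_nth size_w ?size_run_pattern //.
apply/eq_leq/eq_big_nat => x /andP[_ x_F].
by rewrite nth_take // nth_drop nth_run_pattern.
Qed.

Lemma size_pairs k : size (pairs k) = Npairs k.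
Proof.
rewrite /pairs size_allpairs_dep /Npairs -bin2_sum big_nat_rev /= sumnE big_map.
rewrite [in LHS](_ : 1 = 1 + 0) // iotaDl big_map.
rewrite [iota 0 k](_ : _ = index_iota 0 k) ?/index_iota ?subn0 //.
by apply: eq_bigr => i _; rewrite size_iota; lia.
Qed.

Lemma pair_pos_bound k i j : 1 <= i -> i < j -> j <= k -> 1 <= pair_pos k i j <= Npairs k.
Proof.
move=> i1 ij jk; rewrite /pair_pos -size_pairs /= index_mem.
by apply/allpairsPdep; exists i, j; rewrite !mem_iota; split=> //; lia.
Qed.

Lemma pair_pos_1_2 k : 3 <= k -> pair_pos k 1 2 = 1.
Proof. by case: k => [|[|[|k]]]. Qed.

Lemma pair_pos_1_3 k : 3 <= k -> pair_pos k 1 3 = 2.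
Proof. by case: k => [|[|[|k]]]. Qed.

Definition edge_in n (e : nat * nat) := (1 <= e.1) && (e.1 < e.2) && (e.2 <= n).

Lemma size_zeros_blocks m n : size (flatten (nseq m (zeros n))) = m * n.
Proof. by elim: m => //= m IH; rewrite size_cat IH size_nseq mulSn. Qed.

Lemma count_zeros_blocks m n : count id (flatten (nseq m (zeros n))) = 0.
Proof. by elim: m => //= m IH; rewrite count_cat IH count_nseq. Qed.

Lemma size_number n p : 1 <= p <= n -> size (number n p) = n.
Proof. by rewrite /number size_cat /= !size_nseq; lia. Qed.

Lemma nth_number_true n p : 1 <= p -> nth false (number n p) (p - 1) = true.
Proof. by move=> p1; rewrite /number nth_cat size_nseq ltnn subnn. Qed.

Section Encoding.

Variables (n k i j : nat) (e : nat * nat).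
Hypotheses (i_ge1 : 1 <= i) (i_lt_j : i < j) (j_le_k : j <= k) (e_in : edge_in n e).

Lemma size_encode : size (encode n k i j e) = n * k.
Proof.
move: e_in => /andP[/andP[e1 e12] e2].
rewrite /encode size_cat size_zeros_blocks size_cat size_number; last lia.
rewrite size_cat size_zeros_blocks size_cat size_number ?size_zeros_blocks; last lia.
nia.
Qed.

Lemma count_encode : count id (encode n k i j e) = 2.
Proof. by rewrite /encode !count_cat !count_zeros_blocks /= !count_nseq. Qed.

Lemma nth_encode_fst : nth false (encode n k i j e) ((i - 1) * n + (e.1 - 1)).
Proof.
move: e_in => /andP[/andP[e1 e12] e2].
rewrite /encode nth_cat size_zeros_blocks ltnNge leq_addr addKn /=.
rewrite nth_cat size_number; last lia.
by rewrite ifT ?nth_number_true //; lia.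
Qed.

Lemma nth_encode_snd : nth false (encode n k i j e) ((j - 1) * n + (e.2 - 1)).
Proof.
move: e_in => /andP[/andP[e1 e12] e2].
rewrite (_ : (j - 1) * n = (i - 1) * n + (n + (j - i - 1) * n)); last first.
  by rewrite -mulSn -mulnDl; congr (_ * _); lia.
rewrite -!addnA /encode nth_cat size_zeros_blocks ltnNge leq_addr addKn /=.
rewrite nth_cat size_number ?ltnNge ?leq_addr ?addKn /=; last lia.
rewrite nth_cat size_zeros_blocks ltnNge leq_addr addKn /=.
rewrite nth_cat size_number; last lia.
by rewrite ifT ?nth_number_true //; lia.
Qed.

End Encoding.

Lemma size_back_tag n k i' : 1 <= i' <= Npairs k -> size (back_tag n k i') = Npairs k * bb n k.
Proof.
by move=> i'_in; rewrite /back_tag !size_cat !size_nseq -mulSn -mulnDl; congr (_ * _); lia.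
Qed.

Lemma count_back_tag n k i' : count id (back_tag n k i') = bb n k.
Proof. by rewrite /back_tag !count_cat !count_nseq /=; lia. Qed.

Lemma back_tag_1_2_disjoint n k x :
  nth false (back_tag n k 1) x -> nth false (back_tag n k 2) x -> False.
Proof. by rewrite /back_tag /= !nth_cat !size_nseq !nth_nseq !if_same mul1n; case: ltnP. Qed.

Lemma LL_split n k : LL n k = n * k * (3 * n * k).+1 + (n * k + Npairs k * bb n k).
Proof. by rewrite /LL addn1 mulnC addnA. Qed.

Lemma size_front_tag n k : size (front_tag n k) = n * k * (3 * n * k).+1.
Proof. exact: size_run_pattern. Qed.

Lemma size_template n k : size (template n k) = LL n k.
Proof. by rewrite /template !size_cat size_front_tag !size_nseq LL_split. Qed.

Lemma size_block n k i j e : 1 <= i -> i < j -> j <= k -> edge_in n e ->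
  size (block n k i j e) = LL n k.
Proof.
move=> i1 ij jk e_in; rewrite /block size_cat size_front_tag size_cat size_encode //.
by rewrite size_back_tag ?LL_split // pair_pos_bound.
Qed.

Lemma Npairs_ge3 k : 3 <= k -> 3 <= Npairs k.
Proof. by move=> k3; apply: (leq_trans _ (leq_bin2l 2 k3)). Qed.

Lemma aligned_block n k E s i j :
  simple_graph n E -> 2 <= n -> 3 <= k -> size s = LL n k ->
  hamming (template n k) s <= dd n k -> 1 <= i -> i < j -> j <= k ->
  close_substring (choice_string n k E i j) s (dd n k) ->
  exists2 e, e \in E & hamming (block n k i j e) s <= dd n k.
Proof.
set F := n * k * (3 * n * k).+1; set L := F + (n * k + Npairs k * bb n k).
have L_LL : LL n k = L by rewrite LL_split.
set bs := [seq block n k i j e | e <- E].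
move=> [_ /allP E_in] n2 k3 s_size t_s i1 ij jk [p []].
rewrite s_size L_LL /choice_string -/bs => p_size w_s.
have blocks u : u \in bs -> [/\ size u = L, take F u = run_pattern (3 * n * k) (n * k)
                              & count id (drop F u) <= 2 + bb n k].
  case/mapP=> e /E_in e_in ->; rewrite -L_LL size_block //.
  rewrite /block take_size_cat ?drop_size_cat ?size_front_tag //.
  by split; rewrite // count_cat count_encode count_back_tag.
have size_bs : forall b, b < size bs -> size (nth [::] bs b) = L.
  by move=> b b_lt; case: (blocks (nth [::] bs b)) => //; rewrite mem_nth.
have w_t : hamming (take L (drop p (flatten bs))) (template n k) <= 2 * dd n k.
  have := leq_hamming_trans (u := take L (drop p (flatten bs))) (v := s) (w := template n k).
  rewrite size_takel ?size_template ?size_drop; last lia.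
  rewrite (hamming_sym s); lia.
have L_p : L %| p.
  have N3 := Npairs_ge3 k3; have nk2 : 2 * k <= n * k by rewrite leq_mul2r n2 orbT.
  apply: (@flatten_runs_aligned (3 * n * k) (n * k) _ (2 + bb n k) (2 * dd n k) bs p) => //.
  - by rewrite /bb /dd; lia.
  - by rewrite /bb /dd; nia.
  - by rewrite /dd; lia.
  - lia.
  apply: leq_trans (leq_trans (leq_hamming_take F _ _) w_t).
  by rewrite take_takel ?leq_addr // /template take_size_cat // size_front_tag.
have b_lt : p %/ L < size E.
  have L_gt0 : 0 < L by rewrite /L; lia.
  rewrite -(ltn_pmul2r L_gt0) divnK // -(size_map (block n k i j)).
  by rewrite -(size_flatten_uniform size_bs); lia.
exists (nth (0, 0) E (p %/ L)); first exact: mem_nth.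
by rewrite -(nth_map _ [::]) // -(take_drop_flatten_uniform size_bs) ?size_map // divnK // L_LL.
Qed.

Definition encoding_part n k (s : seq bool) := take (n * k) (drop ((3 * n * k + 1) * (n * k)) s).
Definition back_part n k (s : seq bool) := drop ((3 * n * k + 1) * (n * k) + n * k) s.

Lemma section_encoding_part n k s q : q < k ->
  section n k s q = take n (drop (q * n) (encoding_part n k s)).
Proof.
move=> qk; have qn : n + q * n <= n * k by rewrite -mulSn mulnC leq_mul2l qk orbT.
by rewrite /encoding_part take_drop take_takel // -take_drop drop_drop addnC.
Qed.

Section SolutionParts.

Variables (n k : nat) (s : seq bool).
Hypothesis s_size : size s = LL n k.

Local Notation F := ((3 * n * k + 1) * (n * k)).

Lemma cat_parts : take F s ++ encoding_part n k s ++ back_part n k s = s.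
Proof. by rewrite /encoding_part /back_part [_ + n * k]addnC -drop_drop !cat_take_drop. Qed.

Lemma size_front_part : size (take F s) = size (front_tag n k).
Proof.
have F_s : F <= size s by rewrite s_size /LL; lia.
by rewrite size_takel // size_front_tag; lia.
Qed.

Lemma size_encoding_part : size (encoding_part n k s) = n * k.
Proof. by rewrite size_takel // size_drop s_size /LL; lia. Qed.

Lemma size_back_part : size (back_part n k s) = Npairs k * bb n k.
Proof. by rewrite size_drop s_size /LL; lia. Qed.

Lemma hamming_template_parts :
  hamming (template n k) s = hamming (front_tag n k) (take F s) +
    (n * k - count id (encoding_part n k s)) + count id (back_part n k s).
Proof.
rewrite -{1}cat_parts /template hamming_cat ?size_front_part //.
rewrite hamming_cat ?size_nseq ?size_encoding_part //.
by rewrite -size_encoding_part hamming_ones -size_back_part hamming_zeros size_encoding_part addnA.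
Qed.

Lemma hamming_block_parts i j e : 1 <= i -> i < j -> j <= k -> edge_in n e ->
  hamming (block n k i j e) s = hamming (front_tag n k) (take F s) +
    hamming (encode n k i j e) (encoding_part n k s) +
    hamming (back_tag n k (pair_pos k i j)) (back_part n k s).
Proof.
move=> i1 ij jk e_in; rewrite -{1}cat_parts /block hamming_cat ?size_front_part //.
by rewrite hamming_cat ?size_encode ?size_encoding_part ?addnA.
Qed.

End SolutionParts.

Section SolutionSections.

Variables (n k : nat) (s : seq bool).
Hypotheses (n_ge2 : 2 <= n) (k_ge3 : 3 <= k) (s_size : size s = LL n k).
Hypothesis template_s : hamming (template n k) s <= dd n k.
Hypothesis block_s : forall i j, 1 <= i -> i < j -> j <= k ->
  exists2 e, edge_in n e & hamming (block n k i j e) s <= dd n k.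

Local Notation sE := (encoding_part n k s).
Local Notation sB := (back_part n k s).

Lemma pair_fit i j : 1 <= i -> i < j -> j <= k -> exists2 e, edge_in n e &
  [/\ common (encode n k i j e) sE = count id (encode n k i j e),
      common sB (back_tag n k (pair_pos k i j)) = count id sB
    & count id sE = k + count id sB].
Proof.
move=> i1 ij jk; have [e e_in e_s] := block_s i1 ij jk; exists e => //.
have sz_back : size (back_tag n k (pair_pos k i j)) = size sB.
  by rewrite size_back_part // size_back_tag // pair_pos_bound.
have := @hamming_common (encode n k i j e) sE.
rewrite (size_encode i1 ij jk e_in) size_encoding_part // => /(_ erefl).
have := hamming_common sz_back; rewrite common_sym.
have := common_le_count (encode n k i j e) sE.
have := common_le_count sB (back_tag n k (pair_pos k i j)).
have := count_size id sE; rewrite size_encoding_part //.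
have nk2 : 2 * k <= n * k by rewrite leq_mul2r n_ge2 orbT.
(* The two distance bounds add up to at most [2 * dd n k] only if every estimate is tight. *)
move: template_s e_s; rewrite hamming_template_parts // hamming_block_parts //.
rewrite count_encode count_back_tag /dd /bb; split; lia.
Qed.

Lemma count_back_part : count id sB = 0.
Proof.
have [e12 _ [_ sub12 _]] := pair_fit (isT : 1 <= 1) (isT : 1 < 2) (ltnW k_ge3).
have [e13 _ [_ sub13 _]] := pair_fit (isT : 1 <= 1) (isT : 1 < 3) k_ge3.
rewrite pair_pos_1_2 // in sub12; rewrite pair_pos_1_3 // in sub13.
have size_tag i' : 1 <= i' <= Npairs k -> size sB = size (back_tag n k i').
  by move=> i'_in; rewrite size_back_part // size_back_tag.
have N3 := Npairs_ge3 k_ge3.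
apply/eqP; rewrite eqn0Ngt -has_count; apply/(has_nthP false) => -[x _ sB_x].
apply: (@back_tag_1_2_disjoint n k x).
  by apply: common_count_sub sub12 x sB_x; apply: size_tag; lia.
by apply: common_count_sub sub13 x sB_x; apply: size_tag; lia.
Qed.

Lemma count_encoding_part : count id sE = k.
Proof.
have [e _ [_ _ ->]] := pair_fit (isT : 1 <= 1) (isT : 1 < 2) (ltnW k_ge3).
by rewrite count_back_part addn0.
Qed.

Lemma encoding_section_has_one q : q < k -> 0 < count id (take n (drop (q * n) sE)).
Proof.
move=> qk; rewrite -has_count; apply/(has_nthP false).
have size_enc i j e : 1 <= i -> i < j -> j <= k -> edge_in n e -> size (encode n k i j e) = size sE.
  by move=> i1 ij jk e_in; rewrite (size_encode i1 ij jk e_in) size_encoding_part.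
(* Section 0 holds the first endpoint of the edge chosen for (1,2), section q > 0 the second
   endpoint of the edge chosen for (1, q + 1). *)
have [r [r_n sE_r]] : exists r, r < n /\ nth false sE (q * n + r).
  case: q qk => [|q] qk.
    have [e e_in [sub _ _]] := pair_fit (isT : 1 <= 1) (isT : 1 < 2) (ltnW k_ge3).
    exists (e.1 - 1); split; first by move: e_in => /andP[/andP[]]; lia.
    apply: (common_count_sub (size_enc _ _ _ _ _ _ _) sub) => //; first exact: ltnW.
    by have := nth_encode_fst (isT : 1 <= 1) (isT : 1 < 2) (ltnW k_ge3) e_in.
  have [e e_in [sub _ _]] := pair_fit (isT : 1 <= 1) (isT : 1 < q.+2) qk.
  exists (e.2 - 1); split; first by move: e_in => /andP[/andP[]]; lia.
  apply: (common_count_sub (size_enc _ _ _ _ _ _ e_in) sub) => //.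
  by have := nth_encode_snd (isT : 1 <= 1) (isT : 1 < q.+2) qk e_in; rewrite subn1.
exists r; last by rewrite nth_take // nth_drop.
have qn : n + q * n <= n * k by rewrite -mulSn mulnC leq_mul2l qk orbT.
by rewrite size_takel // size_drop size_encoding_part //; lia.
Qed.

Lemma solution_sections q : q < k -> count id (section n k s q) = 1.
Proof.
move=> qk; rewrite section_encoding_part //.
apply: (@sum_eq_all_one (fun q => count id (take n (drop (q * n) sE))) k) => //.
  by move=> q' q'k; apply: encoding_section_has_one.
by rewrite -count_sections ?count_encoding_part // size_encoding_part // mulnC.
Qed.

End SolutionSections.

Theorem lemma5 (n k : nat) (E : seq (nat * nat)) (s : seq bool) :
  simple_graph n E -> 3 <= k -> is_solution n k E s ->
  forall q, q < k -> count id (section n k s q) = 1.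
Proof.
move=> G k_ge3 [s_size [t_close c_close]] q qk.
have [e0 e0_E] : exists e, e \in E.
  case: E G c_close => [|e E'] _ c_close; last by exists e; rewrite mem_head.
  have [p [p_size _]] := c_close 1 2 isT isT (ltnW k_ge3).
  by move: p_size (Npairs_ge3 k_ge3); rewrite s_size /LL /bb /choice_string /=; nia.
have E_in : {in E, forall e, edge_in n e} by case: G => _ /allP.
have n_ge2 : 2 <= n by move: (E_in e0 e0_E) => /andP[/andP[]]; lia.
have t_s := close_substring_same_size (etrans (size_template n k) (esym s_size)) t_close.
apply: solution_sections => // i j i1 ij jk.
have [e eE e_s] := aligned_block G n_ge2 k_ge3 s_size t_s i1 ij jk (c_close i j i1 ij jk).
by exists e; first exact: E_in.
Qed.
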